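(* Let $L$ be a multisorted algebra in the positive existential signature satisfying axioms (1), (2), (3), (7), (8), (9), (10). Let $\varphi$ be an almost morphism from $L$ to the positive existential algebra $A(W)$ of some set $W$. Then there is a set $W^+$ and a morphism $\varphi^+\colon L\to A(W^+)$ of positive existential algebras such that $\ker(\varphi^+)\subseteq\ker(\varphi)$. In particular, if $\varphi$ is injective on each sort, then $\varphi^+$ is an embedding.
   Context: The Boolean prime ideal theorem (equivalently, compactness) is assumed. Signature. There is a sort $n$ for each $n\ge0$. For every function $\alpha\colon\{1,\dots,n\}\to\{1,\dots,k\}$ there is a unary function symbol (''substitution'') $\alpha\colon n\to k$ (argument of sort $n$, value of sort $k$). Each sort has $0,1,\vee,\wedge$; for each $n$ there is $\exists\colon n+1\to n$ (positive existential signature). For $\alpha\colon k\to n$, $\beta\colon n\to m$, $\beta\circ\alpha$ is the substitution symbol of the composite function. The associated cylindrification of $\exists\colon n+1\to n$ is $c\colon n\to n+1$, $c(i)=i$; $\exists^{(n)}$ is $n$-fold projection; $x\le y$ means $x=x\wedge y$. For a set $W$: $\alpha^{\mathrm{tuple}}(x_1,\dots,x_k)=(x_{\alpha(1)},\dots,x_{\alpha(n)})$, $\alpha^{\mathrm{relation}}(r)=\{\bar x\in W^k:\alpha^{\mathrm{tuple}}(\bar x)\in r\}$. The positive existential algebra $A(W)$ interprets sort $n$ as $\mathcal P(W^n)$, $\alpha$ as $\alpha^{\mathrm{relation}}$, $0,1,\vee,\wedge$ as $\emptyset,W^n,\cup,\cap$, and $\exists(r)=\{\bar x:\exists y\,(\bar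 x,y)\in r\}$. An almost morphism $\varphi\colon L\to A(W)$ is a sort-preserving family of maps commuting with all substitutions and with $0,1,\vee,\wedge$, and satisfying $\exists(\varphi(r))\subseteq\varphi(\exists(r))$. A morphism additionally commutes with $\exists$. For a map $f$, $\ker(f)=\{(a,a'): a,a' \text{ of the same sort}, f(a)=f(a')\}$. Axioms: (1) each sort is a bounded distributive lattice; (2) substitutions preserve $0,1,\vee,\wedge$; (3) $(\beta\circ\alpha)(r)=\beta(\alpha(r))$; (7) $\exists(0)=0$, $\exists(r\vee s)=\exists(r)\vee\exists(s)$; (8) $r\le c(\exists(r))$; (9) $\exists(r\wedge c(s))=\exists(r)\wedge s$; (10) for substitutions $\alpha_i\colon k_i\to m$ ($i=1,\dots,n$) and $\beta_i\colon k_i+1\to m+n$ with $\beta_i(j)=\alpha_i(j)$ for $j\le k_i$, $\beta_i(k_i+1)=m+i$: $\exists^{(n)}(\bigwedge_i\beta_i(r_i))=\bigwedge_i\alpha_i(\exists(r_i))$ for all $r_i$ of sort $k_i+1$. *)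

From mathcomp Require Import all_boot.
Set Implicit Arguments. Unset Strict Implicit. Unset Printing Implicit Defensive.

(* Conventions: variables are 0-indexed, so {1,...,n} is 'I_n.
   A substitution symbol alpha : n -> k is a function 'I_n -> 'I_k;
   it acts from sort n to sort k. *)

Record PEAlg := {
  car  :> nat -> Type;
  sub  : forall n k : nat, ('I_n -> 'I_k) -> car n -> car k;
  zero : forall n, car n;
  one  : forall n, car n;
  join : forall n, car n -> car n -> car n;
  meet : forall n, car n -> car n -> car n;
  ex   : forall n, car n.+1 -> car n
}.

Section PEAx.
Variable L : PEAlg.

Definition le n (x y : L n) : Prop := x = meet x y.

Definition cyl n : 'I_n -> 'I_n.+1 := widen_ord (leqnSn n).

(* n-fold projection exists^(n) : sort (n + m) -> sort m
   (removes the last n variables) *)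
Fixpoint exn (m n : nat) : L (n + m) -> L m :=
  match n return L (n + m) -> L m with
  | 0 => fun x => x
  | n'.+1 => fun x => @exn m n' (@ex L (n' + m) x)
  end.

Definition ax1 : Prop := forall n (x y z : L n),
  join x (join y z) = join (join x y) z /\
  meet x (meet y z) = meet (meet x y) z /\
  join x y = join y x /\ meet x y = meet y x /\
  join x (meet x y) = x /\ meet x (join x y) = x /\
  meet x (join y z) = join (meet x y) (meet x z) /\
  join (zero L n) x = x /\ meet (one L n) x = x.

Definition ax2 : Prop := forall n k (a : 'I_n -> 'I_k) (x y : L n),
  [/\ sub a (zero L n) = zero L k, sub a (one L n) = one L k,
      sub a (join x y) = join (sub a x) (sub a y) &
      sub a (meet x y) = meet (sub a x) (sub a y)].

Definition ax3 : Prop := forall k n m (a : 'I_k -> 'I_n) (b : 'I_n -> 'I_m)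
  (r : L k), sub (b \o a) r = sub b (sub a r).

Definition ax7 : Prop := forall n (r s : L n.+1),
  ex (zero L n.+1) = zero L n /\ ex (join r s) = join (ex r) (ex s).

Definition ax8 : Prop := forall n (r : L n.+1), le r (sub (@cyl n) (ex r)).

Definition ax9 : Prop := forall n (r : L n.+1) (s : L n),
  ex (meet r (sub (@cyl n) s)) = meet (ex r) s.

(* (10) with alpha_i : k_i -> m, beta_i : k_i+1 -> m+n (sort written n + m),
   beta_i(j) = alpha_i(j) for the first k_i variables and beta_i(last) = m+i
   (0-indexed: the i-th of the n new variables). *)
Definition ax10 : Prop := forall (n m : nat) (k : 'I_n -> nat)
  (a : forall i, 'I_(k i) -> 'I_m) (b : forall i, 'I_(k i).+1 -> 'I_(n + m)),
  (forall i (j : 'I_(k i)), val (b i (widen_ord (leqnSn (k i)) j)) = val (a i j)) ->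
  (forall i, val (b i ord_max) = m + i) ->
  forall r : forall i, L (k i).+1,
    @exn m n (\big[@meet L (n + m)/one L (n + m)]_(i < n) sub (b i) (r i))
    = \big[@meet L m/one L m]_(i < n) sub (a i) (ex (r i)).

Definition PE_axioms_hold : Prop :=
  ax1 /\ ax2 /\ ax3 /\ ax7 /\ ax8 /\ ax9 /\ ax10.

End PEAx.

(* The positive existential algebra A(W): sort n is P(W^n),
   with W^n represented as 'I_n -> W and subsets as predicates. *)
Definition RelW (W : Type) (n : nat) := ('I_n -> W) -> Prop.

Definition subW (W : Type) n k (a : 'I_n -> 'I_k) (r : RelW W n) : RelW W k :=
  fun x => r (fun i => x (a i)).

Definition snoc (W : Type) n (x : 'I_n -> W) (y : W) : 'I_n.+1 -> W :=
  fun i => match unlift ord_max i with Some j => x j | None => y end.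

Definition exW (W : Type) n (r : RelW W n.+1) : RelW W n :=
  fun x => exists y, r (snoc x y).

Section Morphisms.
Variables (L : PEAlg) (W : Type).
Variable phi : forall n, L n -> RelW W n.

Definition almost_morphism : Prop :=
  (forall n k (a : 'I_n -> 'I_k) (r : L n), phi (sub a r) = subW a (phi r)) /\
      (forall n, phi (zero L n) = (fun _ => False)) /\
      (forall n, phi (one L n) = (fun _ => True)) /\
      (forall n (r s : L n), phi (join r s) = (fun x => phi r x \/ phi s x)) /\
      (forall n (r s : L n), phi (meet r s) = (fun x => phi r x /\ phi s x)) /\
      (forall n (r : L n.+1) x, exW (phi r) x -> phi (ex r) x).

Definition morphism : Prop :=
  almost_morphism /\ forall n (r : L n.+1), phi (ex r) = exW (phi r).

End Morphisms.

(* Henkin-style construction. Call [p] a lattice morphism when it commutes exactly with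
   substitutions and the lattice operations; an almost morphism is one whose only defect is
   that [exW (p r)] may be strictly smaller than [p (ex r)]. Given a lattice morphism on [V],
   adjoin a fresh witness for every statement [p (ex r) x]. For finitely many points and
   witnesses, axioms (9) and (10) show that the witnessing conditions are jointly satisfiable
   over the points, and the prime filter theorem in the sort of all these variables yields a
   local interpretation. A prime filter on sets of finite configurations (compactness) glues
   the local interpretations into a lattice morphism on the extended carrier which agrees
   with [p] on [V]. After omega steps every existential true at some stage is witnessed at
   the next one, so the direct limit is a morphism; it restricts to [phi] on the original
   carrier, which gives the inclusion of kernels. *)

From Pilot Require Import Defs.
From mathcomp Require Import all_boot.
From mathcomp Require classical_sets.
From Stdlib Require Import Classical ClassicalEpsilon FunctionalExtensionality PropExtensionality.
From Stdlib Require Eqdep_dec.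
Set Implicit Arguments. Unset Strict Implicit. Unset Printing Implicit Defensive.

Lemma In_mem (T : eqType) (x : T) s : x \in s -> List.In x s.
Proof. by elim: s => [|y s IH] //=; rewrite in_cons => /orP [/eqP ->|/IH]; [left|right]. Qed.

Lemma In_tnthP (T : Type) (s : seq T) x :
  List.In x s <-> exists i, tnth (in_tuple s) i = x.
Proof.
elim: s => [|y s IH]; first by split=> [[]|[[]]].
split=> [[<-|]|[i hi]].
- by exists ord0; rewrite (tnth_nth y).
- by case/IH => i <-; exists (lift ord0 i); rewrite !(tnth_nth y).
move: hi; case: (unliftP ord0 i) => [j|] -> /=; rewrite (tnth_nth y) /= => hx; last by left.
by right; apply/IH; exists j; rewrite (tnth_nth y).
Qed.

Lemma snoc_widen (V : Type) n (x : 'I_n -> V) y i : snoc x y (widen_ord (leqnSn n) i) = x i.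
Proof.
have -> : widen_ord (leqnSn n) i = lift ord_max i.
  by apply: val_inj; rewrite /= /bump leqNgt ltn_ord.
by rewrite /snoc liftK.
Qed.

Lemma snoc_max (V : Type) n (x : 'I_n -> V) y : snoc x y ord_max = y.
Proof. by rewrite /snoc unlift_none. Qed.

Definition tuple0 (T : Type) : 'I_0 -> T := fun i => False_rect T (notF (ltn_ord i)).

(* Without decidable equality on [T], a position of [x] in [f] is chosen classically;
   a canonical choice makes positions well defined when [f] has repetitions. *)
Definition find_index (T : Type) n (f : 'I_n -> T) (x : T) : option 'I_n :=
  match excluded_middle_informative (exists i, f i = x) with
  | left H => Some (proj1_sig (constructive_indefinite_description _ H))
  | right _ => None
  end.

Lemma find_indexP (T : Type) n (f : 'I_n -> T) x i : find_index f x = Some i -> f i = x.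
Proof.
rewrite /find_index; case: excluded_middle_informative => // H [<-].
exact: proj2_sig (constructive_indefinite_description _ H).
Qed.

Lemma find_index_some (T : Type) n (f : 'I_n -> T) x :
  (exists i, f i = x) -> exists i, find_index f x = Some i.
Proof. by rewrite /find_index; case: excluded_middle_informative => // H _; eexists. Qed.

Section PrimeFilterTheorem.
Variables (T : Type) (le : T -> T -> Prop) (meet join : T -> T -> T).
Hypothesis le_trans : forall x y z, le x y -> le y z -> le x z.
Hypothesis le_meetl : forall x y, le (meet x y) x.
Hypothesis le_meetr : forall x y, le (meet x y) y.
Hypothesis meet_glb : forall x y z, le z x -> le z y -> le z (meet x y).
Hypothesis le_joinl : forall x y, le x (join x y).
Hypothesis le_joinr : forall x y, le y (join x y).
Hypothesis join_lub : forall x y z, le x z -> le y z -> le (join x y) z.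
Hypothesis meet_join_distr :
  forall x y z, le (meet x (join y z)) (join (meet x y) (meet x z)).

Lemma le_meet_meetl x y z : le (meet (meet x y) z) (meet x z).
Proof. by apply: meet_glb (le_meetr _ _); apply: le_trans (le_meetl _ _) (le_meetl _ _). Qed.

Lemma le_meet_meetr x y z : le (meet (meet x y) z) (meet y z).
Proof. by apply: meet_glb (le_meetr _ _); apply: le_trans (le_meetl _ _) (le_meetr _ _). Qed.

Definition up_closed (F : T -> Prop) := forall x y, le x y -> F x -> F y.
Definition meet_closed (F : T -> Prop) := forall x y, F x -> F y -> F (meet x y).
Definition join_closed (J : T -> Prop) := forall x y, J x -> J y -> J (join x y).
Definition prime (Q : T -> Prop) := forall x y, Q (join x y) -> Q x \/ Q y.

Variables F J : T -> Prop.
Hypotheses (F_up : up_closed F) (F_meet : meet_closed F) (F_inhabited : exists x, F x).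
Hypothesis J_join : join_closed J.
Hypothesis FJ_disjoint : forall x, F x -> J x -> False.

Definition separating (Q : T -> Prop) :=
  [/\ up_closed Q, meet_closed Q, (forall x, F x -> Q x) & (forall x, Q x -> J x -> False)].

Lemma separating_ext Q Q' : (forall x, Q x <-> Q' x) -> separating Q -> separating Q'.
Proof.
move=> QQ' [Qup Qmeet FQ QJ]; split.
- by move=> x y lxy /QQ' Qx; apply/QQ'; apply: Qup Qx.
- by move=> x y /QQ' Qx /QQ' Qy; apply/QQ'; apply: Qmeet.
- by move=> x /FQ /QQ'.
- by move=> x /QQ' /QJ.
Qed.

Lemma maximal_separating : exists Q, separating Q /\
  forall Q', separating Q' -> (forall x, Q x -> Q' x) -> forall x, Q' x -> Q x.
Proof.
pose P (A : T -> Prop) := separating (fun x => F x \/ A x).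
have [A [PA Amax]] : exists A, P A /\ forall B, classical_sets.proper A B -> ~ P B.
  apply: classical_sets.Zorn_bigcup => C CP Ctot.
  have inF_or : forall X x, C X -> F x \/ X x -> F x \/ classical_sets.bigcup C id x.
    by move=> X x CX [Fx|Xx]; [left|right; exists X].
  split.
  - move=> x y lxy [Fx|[X CX Xx]]; first by left; apply: F_up Fx.
    by apply: (inF_or X) => //; case: (CP X CX) => up _ _ _; apply: up lxy _; right.
  - move=> x y [Fx|[X CX Xx]] [Fy|[Y CY Yy]]; first by left; apply: F_meet.
    + by apply: (inF_or Y) => //; case: (CP Y CY) => _ mt _ _; apply: mt; [left|right].
    + by apply: (inF_or X) => //; case: (CP X CX) => _ mt _ _; apply: mt; [right|left].
    have [XY|YX] := Ctot X Y CX CY.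
      by apply: (inF_or Y) => //; case: (CP Y CY) => _ mt _ _; apply: mt; right => //; apply: XY.
    by apply: (inF_or X) => //; case: (CP X CX) => _ mt _ _; apply: mt; right => //; apply: YX.
  - by move=> x Fx; left.
  - move=> x [Fx|[X CX Xx]]; first exact: FJ_disjoint.
    by case: (CP X CX) => _ _ _; apply; right.
exists (fun x => F x \/ A x); split=> [//|Q' sepQ' QQ' x Q'x]; right.
have PQ' : P Q'.
  apply: separating_ext (sepQ') => y; split; first by right.
  by case=> // Fy; case: sepQ' => _ _ FQ' _; apply: FQ'.
apply: NNPP => nAx; apply: (Amax Q') => //; split=> [y Ay|Q'A]; first by apply: QQ'; right.
exact: nAx (Q'A x Q'x).
Qed.

Theorem prime_filter_theorem : exists Q, separating Q /\ prime Q.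
Proof.
have [Q [[Qup Qmeet FQ QJ] Qmax]] := maximal_separating.
have [x0 Fx0] := F_inhabited.
exists Q; split => // x y Qxy; apply: NNPP => nQ.
(* If [z] is outside [Q], the filter generated by [Q] and [z] must meet [J]. *)
have meets_J : forall z, ~ Q z -> exists m j, [/\ Q m, J j & le (meet m z) j].
  move=> z Qz; apply: NNPP => nmeet; apply: Qz.
  pose G t := exists m, Q m /\ le (meet m z) t.
  apply: (Qmax G); last by exists x0; split; [exact: FQ | exact: le_meetr].
  - split.
    + by move=> s t lst [m [Qm lm]]; exists m; split => //; apply: le_trans lst.
    + move=> s t [m1 [Qm1 l1]] [m2 [Qm2 l2]]; exists (meet m1 m2); split; first exact: Qmeet.
      by apply: meet_glb; [apply: le_trans l1 | apply: le_trans l2];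
        [apply: le_meet_meetl | apply: le_meet_meetr].
    + by move=> s Fs; exists s; split; [exact: FQ | exact: le_meetl].
    + by move=> s [m [Qm lm]] Js; apply: nmeet; exists m, s.
  - by move=> s Qs; exists s; split => //; apply: le_meetl.
have [m1 [j1 [Qm1 Jj1 l1]]] : exists m j, [/\ Q m, J j & le (meet m x) j].
  by apply: meets_J => Qx; apply: nQ; left.
have [m2 [j2 [Qm2 Jj2 l2]]] : exists m j, [/\ Q m, J j & le (meet m y) j].
  by apply: meets_J => Qy; apply: nQ; right.
apply: (QJ (join j1 j2)); last exact: J_join.
apply: (Qup (meet (meet m1 m2) (join x y))); last exact: Qmeet (Qmeet _ _ Qm1 Qm2) Qxy.
apply: le_trans (meet_join_distr _ _ _) _; apply: join_lub.
  by apply: le_trans (le_joinl _ _); apply: le_trans l1; apply: le_meet_meetl.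
by apply: le_trans (le_joinr _ _); apply: le_trans l2; apply: le_meet_meetr.
Qed.

End PrimeFilterTheorem.

Section PEAlgebra.
Variable L : PEAlg.
Hypotheses (ax1L : ax1 L) (ax2L : ax2 L) (ax3L : ax3 L) (ax7L : ax7 L).
Hypotheses (ax8L : ax8 L) (ax9L : ax9 L) (ax10L : ax10 L).

Local Notation one := (Defs.one L).

Section LatticeFacts.
Variable n : nat.
Implicit Types x y z : L n.

Lemma meetA x y z : meet x (meet y z) = meet (meet x y) z.
Proof. by case: (ax1L x y z) => _ []. Qed.
Lemma meetC x y : meet x y = meet y x.
Proof. by case: (ax1L x y x) => _ [] _ [] _ []. Qed.
Lemma joinC x y : join x y = join y x.
Proof. by case: (ax1L x y x) => _ [] _ []. Qed.
Lemma joinKI x y : join x (meet x y) = x.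
Proof. by case: (ax1L x y x) => _ [] _ [] _ [] _ []. Qed.
Lemma meetKU x y : meet x (join x y) = x.
Proof. by case: (ax1L x y x) => _ [] _ [] _ [] _ [] _ []. Qed.
Lemma meetUr x y z : meet x (join y z) = join (meet x y) (meet x z).
Proof. by case: (ax1L x y z) => _ [] _ [] _ [] _ [] _ [] _ []. Qed.
Lemma meet1x x : meet (one n) x = x.
Proof. by case: (ax1L x x x) => _ [] _ [] _ [] _ [] _ [] _ [] _ []. Qed.

Lemma meetxx x : meet x x = x.
Proof. by rewrite -{2}(joinKI x x) meetKU. Qed.

Lemma le_refl x : le x x.
Proof. by rewrite /le meetxx. Qed.
Lemma le_trans x y z : le x y -> le y z -> le x z.
Proof. by rewrite /le => hxy hyz; rewrite {1}hxy {1}hyz meetA -hxy. Qed.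
Lemma le_meetl x y : le (meet x y) x.
Proof. by rewrite /le (meetC _ x) meetA meetxx. Qed.
Lemma le_meetr x y : le (meet x y) y.
Proof. by rewrite /le -meetA meetxx. Qed.
Lemma meet_glb x y z : le z x -> le z y -> le z (meet x y).
Proof. by rewrite /le => hx hy; rewrite meetA -hx -hy. Qed.
Lemma le_joinl x y : le x (join x y).
Proof. by rewrite /le meetKU. Qed.
Lemma le_joinr x y : le y (join x y).
Proof. by rewrite joinC; apply: le_joinl. Qed.
Lemma le_join_eq x y : le x y -> join x y = y.
Proof. by rewrite /le => ->; rewrite meetC joinC joinKI. Qed.
Lemma join_lub x y z : le x z -> le y z -> le (join x y) z.
Proof. by rewrite /le => hx hy; rewrite meetC meetUr meetC -hx meetC -hy. Qed.
Lemma le_meetUr x y z : le (meet x (join y z)) (join (meet x y) (meet x z)).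
Proof. by rewrite meetUr; apply: le_refl. Qed.
Lemma le1 x : le x (one n).
Proof. by rewrite /le meetC meet1x. Qed.
Lemma le_meet2 x y x' y' : le x x' -> le y y' -> le (meet x y) (meet x' y').
Proof.
by move=> h1 h2; apply: meet_glb; [apply: le_trans h1 | apply: le_trans h2];
  [exact: le_meetl | exact: le_meetr].
Qed.

End LatticeFacts.

Lemma sub_meet n k (a : 'I_n -> 'I_k) (x y : L n) : sub a (meet x y) = meet (sub a x) (sub a y).
Proof. by case: (ax2L a x y). Qed.
Lemma sub_join n k (a : 'I_n -> 'I_k) (x y : L n) : sub a (join x y) = join (sub a x) (sub a y).
Proof. by case: (ax2L a x y). Qed.
Lemma sub_one n k (a : 'I_n -> 'I_k) : sub a (one n) = one k.
Proof. by case: (ax2L a (one n) (one n)). Qed.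
Lemma sub_zero n k (a : 'I_n -> 'I_k) : sub a (zero L n) = zero L k.
Proof. by case: (ax2L a (one n) (one n)). Qed.

Lemma ex_join n (x y : L n.+1) : ex (join x y) = join (ex x) (ex y).
Proof. by case: (ax7L x y). Qed.
Lemma ex_zero n : ex (zero L n.+1) = zero L n.
Proof. by case: (ax7L (zero L n.+1) (zero L n.+1)). Qed.

Lemma exn_join m n (x y : L (n + m)) : exn (join x y) = join (exn x) (exn y).
Proof. by elim: n x y => [|n IH] x y //=; rewrite ex_join IH. Qed.
Lemma exn_zero m n : exn (zero L (n + m)) = zero L m.
Proof. by elim: n => [|n IH] //=; rewrite ex_zero IH. Qed.
Lemma exn_le m n (x y : L (n + m)) : le x y -> le (exn x) (exn y).
Proof. by move=> /le_join_eq <-; rewrite exn_join; apply: le_joinl. Qed.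

Definition widen_addl m k : 'I_m -> 'I_(k + m) := widen_ord (leq_addl k m).

(* Axiom (3) gives no identity law, so [sub id] cannot be removed here. *)
Lemma exn_meet_widen m k (x : L (k + m)) (q : L m) :
  exn (meet x (sub (@widen_addl m k) q)) = meet (exn x) (sub id q).
Proof.
elim: k x => [|k IH] x /=.
  by congr (meet x (sub _ q)); apply: functional_extensionality => i; apply: val_inj.
have -> : @widen_addl m k.+1 = @cyl (k + m) \o @widen_addl m k.
  by apply: functional_extensionality => i; apply: val_inj.
by rewrite ax3L ax9L IH.
Qed.

Lemma le_bigmeet m k (f : 'I_k -> L m) j : le (\big[@meet L m/one m]_(i < k) f i) (f j).
Proof.
elim: k f j => [|k IH] f j; first by case: j.
rewrite big_ord_recl; case: (unliftP ord0 j) => [j'|] ->; last exact: le_meetl.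
by apply: le_trans (le_meetr _ _) (IH _ _).
Qed.

Definition prime_filter n (P : L n -> Prop) :=
  [/\ (forall x y, le x y -> P x -> P y), (forall x y, P (meet x y) <-> P x /\ P y),
      P (one n), ~ P (zero L n) & (forall x y, P (join x y) <-> P x \/ P y)].

Definition lattice_morphism (V : Type) (p : forall n, L n -> RelW V n) :=
  [/\ (forall n k (a : 'I_n -> 'I_k) r x, p k (sub a r) x <-> p n r (fun i => x (a i))),
      (forall n x, ~ p n (zero L n) x), (forall n x, p n (one n) x),
      (forall n r s x, p n (join r s) x <-> p n r x \/ p n s x) &
      (forall n r s x, p n (meet r s) x <-> p n r x /\ p n s x)].

Lemma almost_morphism_lattice V (p : forall n, L n -> RelW V n) :
  almost_morphism p -> lattice_morphism p.
Proof.
case=> psub [p0 [p1 [pjoin [pmeet _]]]]; split.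
- by move=> n k a r x; rewrite psub.
- by move=> n x; rewrite p0.
- by move=> n x; rewrite p1.
- by move=> n r s x; rewrite pjoin.
- by move=> n r s x; rewrite pmeet.
Qed.

Lemma lattice_morphism_morphism V (p : forall n, L n -> RelW V n) :
  lattice_morphism p -> (forall n (r : L n.+1) x, p _ (ex r) x <-> exW (p _ r) x) ->
  morphism p.
Proof.
have relE n (P Q : RelW V n) : (forall x, P x <-> Q x) -> P = Q.
  by move=> PQ; apply: functional_extensionality => x; apply: propositional_extensionality.
case=> psub p0 p1 pjoin pmeet pex; split; last by move=> n r; apply: relE.
split; [|split; [|split; [|split; [|split]]]].
- by move=> n k a r; apply: relE.
- by move=> n; apply: relE => x; split=> // /p0.
- by move=> n; apply: relE.
- by move=> n r s; apply: relE.
- by move=> n r s; apply: relE.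
- by move=> n r x /pex.
Qed.

Section LatticeMorphism.
Variables (V : Type) (p : forall n, L n -> RelW V n).
Arguments p : clear implicits.
Hypothesis p_hom : lattice_morphism p.

Lemma lattice_morphism_le n (x y : L n) z : le x y -> p n x z -> p n y z.
Proof. by case: p_hom => _ _ _ _ pmeet; rewrite /le => -> /pmeet []. Qed.

Lemma lattice_morphism_sub_id n (q : L n) z : p n (sub id q) z <-> p n q z.
Proof. by case: p_hom => psub _ _ _ _; apply: psub. Qed.

Lemma lattice_morphism_ex n (r : L n.+1) x y : p _ r (snoc x y) -> p _ (ex r) x.
Proof.
move=> /(lattice_morphism_le (ax8L r)); case: p_hom => psub _ _ _ _ /psub.
by congr p; apply: functional_extensionality => i; apply: snoc_widen.
Qed.

Lemma lattice_morphism_bigmeet m k (f : 'I_k -> L m) x :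
  p m (\big[@meet L m/one m]_(i < k) f i) x <-> forall j, p m (f j) x.
Proof.
split=> [pf j|]; first exact: lattice_morphism_le (le_bigmeet _ _) pf.
case: p_hom => _ _ p1 _ pmeet.
elim: k f => [|k IH] f pf; first by rewrite big_ord0.
by rewrite big_ord_recl; apply/pmeet; split; [exact: pf | apply: IH => j; apply: pf].
Qed.

Lemma prime_filter_extending m k (b : 'I_m -> V) (Phi : L (k + m)) :
  p m (exn Phi) b ->
  exists P, [/\ prime_filter P, P Phi & forall q, P (sub (@widen_addl m k) q) <-> p m q b].
Proof.
move=> pPhi; case: (p_hom) => _ p0 p1 pjoin pmeet.
(* [G s]: [Phi /\ s] can be satisfied above [b]. *)
pose G s := p m (exn (meet Phi s)) b.
pose F s := exists q, p m q b /\ le (meet Phi (sub (@widen_addl m k) q)) s.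
have G_le x y : le x y -> G x -> G y.
  by move=> lxy; apply: lattice_morphism_le; apply: exn_le; apply: le_meet2 (le_refl _) lxy.
have G_widen q : G (sub (@widen_addl m k) q) <-> p m q b.
  by rewrite /G exn_meet_widen pmeet lattice_morphism_sub_id; tauto.
have [Q [[Qup Qmeet FQ QG] Qprime]] :
    exists Q, separating (@le L _) (@meet L _) F (fun s => ~ G s) Q /\ prime (@join L _) Q.
  apply: prime_filter_theorem;
    [exact: le_trans | exact: le_meetl | exact: le_meetr | exact: meet_glb | exact: le_joinl
    | exact: le_joinr | exact: join_lub | exact: le_meetUr | | | | |].
  - by move=> x y lxy [q [pq lq]]; exists q; split=> //; apply: le_trans lxy.
  - move=> x y [q1 [pq1 l1]] [q2 [pq2 l2]]; exists (meet q1 q2); split; first by apply/pmeet.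
    rewrite sub_meet; apply: meet_glb.
      by apply: le_trans l1; apply: le_meet2 (le_refl _) (le_meetl _ _).
    by apply: le_trans l2; apply: le_meet2 (le_refl _) (le_meetr _ _).
  - by exists (meet Phi (sub (@widen_addl m k) (one m))), (one m); split=> //; apply: le_refl.
  - by move=> x y Gx Gy; rewrite /G meetUr exn_join pjoin; case.
  - move=> x [q [pq lq]]; apply; apply: (G_le _ _ lq).
    by rewrite /G meetA meetxx exn_meet_widen pmeet lattice_morphism_sub_id.
have QPhi : Q Phi by apply: FQ; exists (one m); split=> //; apply: le_meetl.
exists Q; split=> //; last first.
  move=> q; split=> [Qq|pq]; last by apply: FQ; exists q; split=> //; apply: le_meetr.
  by apply/G_widen; apply: NNPP (QG _ Qq).
split=> //.
- move=> x y; split=> [Qxy|[Qx Qy]]; last exact: Qmeet.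
  by split; apply: Qup Qxy; [exact: le_meetl | exact: le_meetr].
- by apply: Qup QPhi; apply: le1.
- move=> Q0; apply: (QG _ Q0) => G0; apply: (p0 m b).
  by apply: lattice_morphism_le G0; rewrite -(exn_zero m k); apply: exn_le; apply: le_meetr.
- move=> x y; split=> [/Qprime //|[] Qx]; apply: Qup Qx; [exact: le_joinl | exact: le_joinr].
Qed.

Lemma prime_filter_of_demands m (b : 'I_m -> V) k (ar : 'I_k -> nat)
    (r : forall j, L (ar j).+1) (a : forall j, 'I_(ar j) -> 'I_m)
    (c : forall j, 'I_(ar j).+1 -> 'I_(k + m)) :
  (forall j i, val (c j (widen_ord (leqnSn (ar j)) i)) = val (a j i)) ->
  (forall j, val (c j ord_max) = m + j) ->
  (forall j, p _ (ex (r j)) (fun i => b (a j i))) ->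
  exists P, [/\ prime_filter P, (forall q, P (sub (@widen_addl m k) q) <-> p m q b)
              & forall j, P (sub (c j) (r j))].
Proof.
move=> c_first c_last demands.
pose Phi := \big[@meet L (k + m)/one (k + m)]_(j < k) sub (c j) (r j).
have pPhi : p m (exn Phi) b.
  rewrite (ax10L c_first c_last) lattice_morphism_bigmeet => j.
  by case: p_hom => psub _ _ _ _; apply/psub.
have [P [Pprime PPhi Pwiden]] := prime_filter_extending pPhi.
exists P; split=> // j; case: Pprime => Pup _ _ _ _; apply: Pup PPhi; apply: le_bigmeet.
Qed.

End LatticeMorphism.

Record demand (V : Type) (p : forall n, L n -> RelW V n) := Demand {
  dem_arity : nat;
  dem_rel : L dem_arity.+1;
  dem_args : 'I_dem_arity -> V;
  dem_holds : p _ (ex dem_rel) dem_args }.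
Arguments dem_arity {V p}.
Arguments dem_rel {V p}.
Arguments dem_args {V p}.

Section OneStep.
Variables (V : Type) (p : forall n, L n -> RelW V n).
Arguments p : clear implicits.
Hypothesis p_hom : lattice_morphism p.

(* One fresh witness for every existential statement that holds in [p]. *)
Definition ext := (V + demand p)%type.

Definition one_step_extension (q : forall n, L n -> RelW ext n) :=
  [/\ lattice_morphism q, (forall n r x, q n r (fun i => inl (x i)) <-> p n r x)
    & forall d : demand p, q _ (dem_rel d) (snoc (fun i => inl (dem_args d i)) (inr d))].

Definition config := (seq V * seq (demand p))%type.

Definition covers (c : config) (e : ext) :=
  match e with inl w => List.In w c.1 | inr d => List.In d c.2 end.

Definition closed_config (c : config) :=
  forall d, List.In d c.2 -> forall i, List.In (dem_args d i) c.1.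

Definition covering n (z : 'I_n -> ext) (c : config) :=
  closed_config c /\ forall i, covers c (z i).

Definition config_cat (c1 c2 : config) : config := (c1.1 ++ c2.1, c1.2 ++ c2.2).

Lemma covers_catl c1 c2 e : covers c1 e -> covers (config_cat c1 c2) e.
Proof. by case: e => [w|d] /= h; apply: List.in_or_app; left. Qed.

Lemma covers_catr c1 c2 e : covers c2 e -> covers (config_cat c1 c2) e.
Proof. by case: e => [w|d] /= h; apply: List.in_or_app; right. Qed.

Lemma closed_config_cat c1 c2 :
  closed_config c1 -> closed_config c2 -> closed_config (config_cat c1 c2).
Proof.
move=> cl1 cl2 d dc i; apply: List.in_or_app.
by case: (List.in_app_or _ _ _ dc) => [d1|d2]; [left; apply: cl1 | right; apply: cl2].
Qed.

Lemma cover_elem e : exists c, closed_config c /\ covers c e.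
Proof.
case: e => [w|d]; first by exists ([:: w], [::]); split=> [d []|]; left.
exists (map (dem_args d) (enum 'I_(dem_arity d)), [:: d]); split; last by left.
by move=> d' [<-|[]] i; apply: List.in_map; apply: In_mem; rewrite mem_enum.
Qed.

Lemma cover_tuple n (z : 'I_n -> ext) : exists c, covering z c.
Proof.
elim: n z => [|n IH] z; first by exists ([::], [::]); split=> [d []|[]].
have [c1 [cl1 cov1]] := cover_elem (z ord0).
have [c2 [cl2 cov2]] := IH (fun i => z (lift ord0 i)).
exists (config_cat c1 c2); split; first exact: closed_config_cat.
by move=> i; case: (unliftP ord0 i) => [j|] ->; [apply: covers_catr | apply: covers_catl].
Qed.

Record local_model (c : config) (q : forall n, L n -> RelW ext n) : Prop := {
  lm_sub : forall n k (a : 'I_n -> 'I_k) r (z : 'I_k -> ext), (forall i, covers c (z i)) ->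
     (q k (sub a r) z <-> q n r (fun i => z (a i)));
  lm_zero : forall n z, ~ q n (zero L n) z;
  lm_one : forall n z, (forall i, covers c (z i)) -> q n (one n) z;
  lm_join : forall n r s z, (forall i, covers c (z i)) ->
     (q n (join r s) z <-> q n r z \/ q n s z);
  lm_meet : forall n r s z, (forall i, covers c (z i)) ->
     (q n (meet r s) z <-> q n r z /\ q n s z);
  lm_base : forall n r (x : 'I_n -> V), (forall i, List.In (x i) c.1) ->
     (q n r (fun i => inl (x i)) <-> p n r x);
  lm_demand : forall d, List.In d c.2 ->
     q _ (dem_rel d) (snoc (fun i => inl (dem_args d i)) (inr d)) }.

Section LocalModel.
Variable c : config.
Hypothesis c_closed : closed_config c.

Local Notation m := (size c.1).
Local Notation k := (size c.2).

Definition config_points : 'I_m -> V := tnth (in_tuple c.1).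
Definition config_demands : 'I_k -> demand p := tnth (in_tuple c.2).

Lemma demand_var_subproof (j : 'I_k) : m + j < k + m.
Proof. by rewrite addnC ltn_add2r. Qed.

(* Variables of sort [k + m]: the points of [c] first, then one per demand of [c]. *)
Definition demand_var (j : 'I_k) : 'I_(k + m) := Ordinal (demand_var_subproof j).

Definition var_of (e : ext) : option 'I_(k + m) :=
  match e with
  | inl w => omap (@widen_addl m k) (find_index config_points w)
  | inr d => omap demand_var (find_index config_demands d)
  end.

Lemma covered_vars n (z : 'I_n -> ext) :
  (forall i, covers c (z i)) -> exists a, forall i, var_of (z i) = Some (a i).
Proof.
move=> cov; suff zv i : exists v, var_of (z i) = Some v by apply: fin_all_exists zv.
by move: (cov i); case: (z i) => [w|d] /= /In_tnthP e; have [v ->] := find_index_some e; eexists.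
Qed.

Lemma arg_var_subproof (j : 'I_k) i :
  exists v, find_index config_points (dem_args (config_demands j) i) = Some v.
Proof. by apply/find_index_some/In_tnthP/c_closed/In_tnthP; exists j. Qed.

Definition arg_var j i : 'I_m :=
  proj1_sig (constructive_indefinite_description _ (@arg_var_subproof j i)).
Arguments arg_var : clear implicits.

Lemma arg_varE j i : find_index config_points (dem_args (config_demands j) i) = Some (arg_var j i).
Proof. exact: proj2_sig (constructive_indefinite_description _ (@arg_var_subproof j i)). Qed.

Definition demand_vars j : 'I_(dem_arity (config_demands j)).+1 -> 'I_(k + m) :=
  snoc (fun i => @widen_addl m k (arg_var j i)) (demand_var j).
Arguments demand_vars : clear implicits.

Lemma config_filter_exists : exists P, [/\ prime_filter P,
  (forall q, P (sub (@widen_addl m k) q) <-> p m q config_points)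
  & forall j, P (sub (demand_vars j) (dem_rel (config_demands j)))].
Proof.
apply: (prime_filter_of_demands p_hom) => [j i|j|j]; rewrite /demand_vars.
- by rewrite snoc_widen.
- by rewrite snoc_max.
have -> : (fun i => config_points (arg_var j i)) = dem_args (config_demands j).
  by apply: functional_extensionality => i; apply: find_indexP; apply: arg_varE.
exact: dem_holds.
Qed.

Section FilterModel.
Variable P : L (k + m) -> Prop.
Hypothesis P_prime : prime_filter P.
Hypothesis P_points : forall q, P (sub (@widen_addl m k) q) <-> p m q config_points.
Hypothesis P_demands : forall j, P (sub (demand_vars j) (dem_rel (config_demands j))).

Definition filter_model n (r : L n) (z : 'I_n -> ext) :=
  exists a, (forall i, var_of (z i) = Some (a i)) /\ P (sub a r).

Lemma filter_modelE n r (z : 'I_n -> ext) a :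
  (forall i, var_of (z i) = Some (a i)) -> filter_model r z <-> P (sub a r).
Proof.
move=> za; split=> [[a' [za' Pa']]|]; last by exists a.
suff -> : a = a' by [].
by apply: functional_extensionality => i; move: (za i); rewrite za' => -[].
Qed.

Lemma filter_model_local : local_model c filter_model.
Proof.
case: P_prime => Pup Pmeet P1 P0 Pjoin.
split.
- move=> n k' a r z /covered_vars [b zb].
  by rewrite (filter_modelE _ zb) (@filter_modelE _ _ _ (b \o a)) // ax3L.
- by move=> n z [a [_]]; rewrite sub_zero.
- by move=> n z /covered_vars [a za]; rewrite (filter_modelE _ za) sub_one.
- by move=> n r s z /covered_vars [a za]; rewrite !(filter_modelE _ za) sub_join.
- by move=> n r s z /covered_vars [a za]; rewrite !(filter_modelE _ za) sub_meet.
- move=> n r x xc.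
  have [a xa] : exists a, forall i, find_index config_points (x i) = Some (a i).
    suff xi i : exists v, find_index config_points (x i) = Some v by apply: fin_all_exists xi.
    exact/find_index_some/In_tnthP/xc.
  rewrite (@filter_modelE _ _ _ (@widen_addl m k \o a)); last by move=> i /=; rewrite xa.
  rewrite ax3L P_points; case: p_hom => psub _ _ _ _; rewrite psub.
  have -> // : (fun i => config_points (a i)) = x.
  by apply: functional_extensionality => i; apply: find_indexP.
- move=> d /In_tnthP dc; have [j jd] := find_index_some dc.
  have dj := find_indexP jd; subst d.
  rewrite (@filter_modelE _ _ _ (demand_vars j)) // => i.
  by rewrite /demand_vars /snoc; case: (unlift ord_max i) => [i'|] /=; rewrite ?arg_varE ?jd.
Qed.

End FilterModel.

Lemma local_model_exists : exists q, local_model c q.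
Proof.
have [P [Pprime Ppoints Pdemands]] := config_filter_exists.
by exists (filter_model P); apply: filter_model_local.
Qed.

End LocalModel.

(* This is where compactness enters. *)
Lemma config_ultrafilter_exists : exists U : (config -> Prop) -> Prop,
  [/\ (forall A B, (forall c, A c -> B c) -> U A -> U B),
      (forall A B, U A -> U B -> U (fun c => A c /\ B c)),
      (forall A B, U (fun c => A c \/ B c) -> U A \/ U B),
      (forall n (z : 'I_n -> ext), U (covering z))
    & forall A, U A -> exists c, A c].
Proof.
pose subset (A B : config -> Prop) := forall c, A c -> B c.
pose F A := exists n (z : 'I_n -> ext), subset (covering z) A.
have [U [[Uup Umeet FU UJ] Uprime]] : exists U, separating subset (fun A B c => A c /\ B c)
    F (fun A => forall c, ~ A c) U /\ prime (fun A B c => A c \/ B c) U.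
  apply: prime_filter_theorem; rewrite /subset.
  - by move=> A B C sAB sBC c /sAB /sBC.
  - by move=> A B c [].
  - by move=> A B c [].
  - by move=> A B C sAB sAC c Ac; split; [apply: sAB | apply: sAC].
  - by move=> A B c; left.
  - by move=> A B c; right.
  - by move=> A B C sAC sBC c [/sAC|/sBC].
  - by move=> A B C c [Ac [Bc|Cc]]; [left|right].
  - by move=> A B sAB [n [z zA]]; exists n, z => c /zA /sAB.
  - move=> A B [n1 [z1 z1A]] [n2 [z2 z2B]].
    exists (n1 + n2), (fun i => match split i with inl i1 => z1 i1 | inr i2 => z2 i2 end).
    move=> c [cl cov]; split; [apply: z1A | apply: z2B]; split=> // i.
      by have := cov (unsplit (inl i)); rewrite unsplitK.
    by have := cov (unsplit (inr i)); rewrite unsplitK.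
  - by exists (fun _ => True), 0, (tuple0 ext).
  - by move=> A B nA nB c [/nA|/nB].
  - by move=> A [n [z zA]] nA; have [c cz] := cover_tuple z; apply: (nA c); apply: zA.
exists U; split=> //.
- by move=> n z; apply: FU; exists n, z.
- by move=> A UA; apply: NNPP => nA; apply: (UJ _ UA) => c Ac; apply: nA; exists c.
Qed.

Section Gluing.
Variable U : (config -> Prop) -> Prop.
Hypothesis U_up : forall A B, (forall c, A c -> B c) -> U A -> U B.
Hypothesis U_meet : forall A B, U A -> U B -> U (fun c => A c /\ B c).
Hypothesis U_prime : forall A B, U (fun c => A c \/ B c) -> U A \/ U B.
Hypothesis U_covering : forall n (z : 'I_n -> ext), U (covering z).
Hypothesis U_inhabited : forall A, U A -> exists c, A c.

Definition local_choice (c : config) : forall n, L n -> RelW ext n :=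
  epsilon (inhabits (fun n (_ : L n) (_ : 'I_n -> ext) => True)) (local_model c).

Lemma local_choiceP c : closed_config c -> local_model c (local_choice c).
Proof. by move=> cl; apply: epsilon_spec; apply: local_model_exists. Qed.

Definition glued n (r : L n) (z : 'I_n -> ext) := U (fun c => local_choice c r z).

Lemma U_congr n (z : 'I_n -> ext) (A B : config -> Prop) :
  (forall c, covering z c -> A c <-> B c) -> U A <-> U B.
Proof.
move=> AB; split=> UA; apply: U_up (U_meet UA (U_covering z)) => c [? ?]; exact/AB.
Qed.

Lemma U_const (P : Prop) : U (fun _ => P) <-> P.
Proof.
split; first by case/U_inhabited.
by move=> HP; apply: U_up (U_covering (tuple0 ext)).
Qed.

Lemma glued_one_step : one_step_extension glued.
Proof.
split; first split.
- move=> n k a r z; apply: (U_congr (z := z)) => c [cl cov].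
  exact: lm_sub (local_choiceP cl) _ _ _ _ _ cov.
- move=> n z /(U_meet (U_covering z)) /U_inhabited [c [[cl _] Zc]].
  exact: lm_zero (local_choiceP cl) _ _ Zc.
- move=> n z; apply: U_up (U_covering z) => c [cl cov].
  exact: lm_one (local_choiceP cl) _ _ cov.
- move=> n r s z; rewrite /glued (U_congr (z := z)
    (B := fun c => local_choice c r z \/ local_choice c s z)); last first.
    by move=> c [cl cov]; apply: lm_join (local_choiceP cl) _ _ _ _ cov.
  by split=> [/U_prime //|[] Ur]; apply: U_up Ur => c ?; [left|right].
- move=> n r s z; rewrite /glued (U_congr (z := z)
    (B := fun c => local_choice c r z /\ local_choice c s z)); last first.
    by move=> c [cl cov]; apply: lm_meet (local_choiceP cl) _ _ _ _ cov.
  by split=> [Urs|[Ur Us]]; [split; apply: U_up Urs => c [] | apply: U_meet].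
- move=> n r x; rewrite /glued -(U_const (p n r x)).
  by apply: (U_congr (z := fun i => inl (x i))) => c [cl cov]; apply: lm_base (local_choiceP cl) _ _ _ cov.
- move=> d; apply: U_up (U_covering (snoc (fun i => inl (dem_args d i)) (inr d))) => c [cl cov].
  by apply: lm_demand (local_choiceP cl) _ _; have := cov ord_max; rewrite snoc_max.
Qed.

End Gluing.

Lemma one_step : exists q, one_step_extension q.
Proof.
have [U [Uup Umeet Uprime Ucov Uinh]] := config_ultrafilter_exists.
by exists (glued U); apply: glued_one_step.
Qed.

End OneStep.

Arguments one_step_extension {V} p q.

Definition step V (p : forall n, L n -> RelW V n) : forall n, L n -> RelW (ext p) n :=
  epsilon (inhabits (fun n (_ : L n) (_ : 'I_n -> ext p) => True)) (one_step_extension p).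
Arguments step {V} p n.

Lemma stepP V (p : forall n, L n -> RelW V n) :
  lattice_morphism p -> one_step_extension p (step p).
Proof. by move=> p_hom; apply: epsilon_spec; apply: one_step. Qed.

Fixpoint stage W (phi : forall n, L n -> RelW W n) k : {T : Type & forall n, L n -> RelW T n} :=
  if k is k'.+1 then existT _ _ (step (projT2 (stage phi k'))) else existT _ W phi.

Section DirectLimit.
Variables (W : Type) (phi : forall n, L n -> RelW W n).
Arguments phi : clear implicits.
Hypothesis phi_hom : lattice_morphism phi.

Definition carrier k := projT1 (stage phi k).
Definition interp k : forall n, L n -> RelW (carrier k) n := projT2 (stage phi k).
Arguments interp k [n].

Lemma interp_step k : lattice_morphism (interp k) /\ one_step_extension (interp k) (interp k.+1).
Proof.
elim: k => [|k [_ [hom _ _]]]; first by split=> //; apply: stepP.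
by split=> //; apply: stepP.
Qed.

Lemma interp_lift k n s (y : 'I_n -> carrier k) :
  interp k.+1 s (fun i => inl (y i)) <-> interp k s y.
Proof. by case: (interp_step k) => _ [_ h _]; apply: h. Qed.

Definition limit := {k : nat & carrier k}.

Definition limit_succ (e : limit) : limit := existT carrier (projT1 e).+1 (inl (projT2 e)).

Definition represents k (y : carrier k) (e : limit) :=
  exists d, iter d limit_succ e = existT carrier k y.

Definition represents_tuple k n (y : 'I_n -> carrier k) (x : 'I_n -> limit) :=
  forall i, represents (y i) (x i).

Lemma tag_iter_succ d e : projT1 (iter d limit_succ e) = d + projT1 e.
Proof. by elim: d => //= d ->. Qed.

Lemma represents_succ k (y : carrier k) e : represents y e -> represents (inl y : carrier k.+1) e.
Proof. by case=> d hd; exists d.+1; rewrite /= hd. Qed.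

Lemma represents_exists k e : projT1 e <= k -> exists y : carrier k, represents y e.
Proof.
move=> ek; have := tag_iter_succ (k - projT1 e) e; rewrite subnK //.
case hd: (iter (k - projT1 e) limit_succ e) => [k' y] /= k'k; subst k'.
by exists y, (k - projT1 e).
Qed.

Lemma represents_unique k (y1 y2 : carrier k) e : represents y1 e -> represents y2 e -> y1 = y2.
Proof.
case=> d1 h1 [d2 h2]; have d12 : d1 = d2.
  by apply/eqP; rewrite -(eqn_add2r (projT1 e)) -!tag_iter_succ h1 h2.
by move: h2; rewrite -d12 h1 => /(Eqdep_dec.inj_pair2_eq_dec _ PeanoNat.Nat.eq_dec _ _ _ _).
Qed.

Lemma represents_tuple_exists n (x : 'I_n -> limit) : exists k y, @represents_tuple k n y x.
Proof.
pose K := \max_i projT1 (x i).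
suff xi i : exists y : carrier K, represents y (x i).
  by have [y xy] := fin_all_exists xi; exists K, y.
by apply: represents_exists; apply: (leq_bigmax (F := fun i => projT1 (x i))).
Qed.

(* The equation [k' = d + k] is needed because [carrier (d.+1 + k)] and
   [carrier (d + k.+1)] are not convertible. *)
Lemma interp_represents_add n (x : 'I_n -> limit) s d : forall k k' y y', k' = d + k ->
  @represents_tuple k n y x -> @represents_tuple k' n y' x -> (interp k s y <-> interp k' s y').
Proof.
elim: d => [|d IH] k k' y y' kk' yx y'x; subst k'.
  suff -> : y = y' by [].
  by apply: functional_extensionality => i; apply: represents_unique (yx i) (y'x i).
rewrite -interp_lift; apply: (IH k.+1) y'x; first by rewrite addSnnS.
by move=> i; apply: represents_succ.
Qed.

Lemma interp_represents n (x : 'I_n -> limit) s k k' y y' :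
  @represents_tuple k n y x -> @represents_tuple k' n y' x -> (interp k s y <-> interp k' s y').
Proof.
move=> yx y'x; case: (leqP k k') => kk'.
  by apply: (@interp_represents_add n x s (k' - k)) yx y'x; rewrite subnK.
by apply: iff_sym; apply: (@interp_represents_add n x s (k - k')) y'x yx; rewrite subnK // ltnW.
Qed.

Definition limit_interp n (s : L n) (x : 'I_n -> limit) :=
  exists k y, @represents_tuple k n y x /\ interp k s y.

Lemma limit_interpE n (s : L n) x k y :
  @represents_tuple k n y x -> (limit_interp s x <-> interp k s y).
Proof.
move=> yx; split=> [[k' [y' [y'x h]]]|]; last by exists k, y.
exact/(interp_represents _ yx y'x).
Qed.

Lemma limit_interp_hom : lattice_morphism limit_interp.
Proof.
split.
- move=> n k a r z; have [K [y yz]] := represents_tuple_exists z.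
  rewrite (limit_interpE _ yz) (@limit_interpE _ r _ K (fun i => y (a i))) => [|i]; last exact: yz.
  by case: (interp_step K) => -[].
- move=> n z; have [K [y yz]] := represents_tuple_exists z; rewrite (limit_interpE _ yz).
  by case: (interp_step K) => -[].
- move=> n z; have [K [y yz]] := represents_tuple_exists z; rewrite (limit_interpE _ yz).
  by case: (interp_step K) => -[].
- move=> n r s z; have [K [y yz]] := represents_tuple_exists z; rewrite !(limit_interpE _ yz).
  by case: (interp_step K) => -[].
- move=> n r s z; have [K [y yz]] := represents_tuple_exists z; rewrite !(limit_interpE _ yz).
  by case: (interp_step K) => -[].
Qed.

Lemma limit_interp_ex n (r : L n.+1) x : limit_interp (ex r) x <-> exW (limit_interp r) x.
Proof.
split; last by case=> y; apply: (lattice_morphism_ex limit_interp_hom).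
have [K [y yx]] := represents_tuple_exists x; rewrite (limit_interpE _ yx) => rK.
have [_ [_ _ witness]] := interp_step K.
pose e : limit := existT carrier K.+1 (inr (Demand rK)).
have ye : @represents_tuple K.+1 _ (snoc (fun i => inl (y i)) (inr (Demand rK))) (snoc x e).
  move=> i; rewrite /snoc; case: (unlift ord_max i) => [j|]; first exact: represents_succ.
  by exists 0.
by exists e; apply/(limit_interpE _ ye); exact: witness (Demand rK).
Qed.

Lemma limit_interp_base n s (x : 'I_n -> W) :
  limit_interp s (fun i => existT carrier 0 (x i)) <-> phi n s x.
Proof. by rewrite (@limit_interpE _ s _ 0 x) // => i; exists 0. Qed.

End DirectLimit.

End PEAlgebra.

Theorem lemma4p14 (L : PEAlg) (W : Type) (phi : forall n, L n -> RelW W n) :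
  PE_axioms_hold L -> almost_morphism phi ->
  exists (Wp : Type) (phip : forall n, L n -> RelW Wp n),
    [/\ morphism phip,
        (forall n (a b : L n), phip n a = phip n b -> phi n a = phi n b) &
        ((forall n, injective (phi n)) -> forall n, injective (phip n))].
Proof.
move=> [ax1L [ax2L [ax3L [ax7L [ax8L [ax9L ax10L]]]]]] /almost_morphism_lattice phi_hom.
have phip_ker n (a b : L n) :
    limit_interp (phi := phi) a = limit_interp b -> phi n a = phi n b.
  move=> ab; apply: functional_extensionality => x; apply: propositional_extensionality.
  by rewrite -!(limit_interp_base ax1L ax2L ax3L ax7L ax9L ax10L phi_hom) ab.
exists (limit phi), (@limit_interp L W phi); split=> [||phi_inj n a b /phip_ker /phi_inj //].
  apply: lattice_morphism_morphism; first exact: limit_interp_hom.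
  exact: limit_interp_ex.
exact: phip_ker.
Qed.
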